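(* Let $k$ be a field of characteristic $2$, $g = x^2+y^2z+yz^2+xyz$, $m\ge 0$, $R_m = k[x_0,\dots,x_m,y_0,\dots,y_m,z_0,\dots,z_m]$. For positive integers $p,q,r\le m+1$ set $\mathbf{x}_p=\sum_{i=p}^m x_it^i$, $\mathbf{y}_q=\sum_{i=q}^m y_it^i$, $\mathbf{z}_r=\sum_{i=r}^m z_it^i$, and define $G_{pqr}^{(l)}\in R_m$ ($0\le l\le m$) by $g(\mathbf{x}_p,\mathbf{y}_q,\mathbf{z}_r)=\sum_{l=0}^m G_{pqr}^{(l)}t^l$ in $R_m[t]/\langle t^{m+1}\rangle$. Then for $0\le l\le m$, $$G_{pqr}^{(l)} = \sum_{u\ge p,\,2u=l} x_u^2 + \sum_{v\ge q,\,w\ge r,\,2v+w=l} y_v^2z_w + \sum_{v\ge q,\,w\ge r,\,v+2w=l} y_vz_w^2 + \sum_{u\ge p,\,v\ge q,\,w\ge r,\,u+v+w=l} x_uy_vz_w$$ (empty sums being $0$). Furthermore: (1) If $l<2p$, $l<2q+r$ and $l<q+2r$, then $G_{pqr}^{(l)}=0$. (2) If $l=2p$, $l<2q+r$ and $l<q+2r$, then $G_{pqr}^{(l)}=x_p^2$. (3) If $p>q=r$ and $l=2p=3q$, then $G_{pqq}^{(l)}=x_p^2+y_q^2z_q+y_qz_q^2$. (4) If $p\ge q>r$ and $l\ge 2p=q+2r$, then $T_y(G_{pqr}^{(l)})=y_{l-2r}z_r^2$. (5) If $p\ge r>q$ and $l\ge 2p=2q+r$, then $T_z(G_{pqr}^{(l)})=y_q^2z_{l-2q}$.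 (6) If $p>q=r$ and $l>3q$, then $T_y(G_{pqq}^{(l)})=y_{l-2q}z_q^2$. (7) If $p>q=r$ and $l>3q$, then $T_z(G_{pqq}^{(l)})=y_q^2z_{l-2q}$.
   Context: For $h\in R_m$, let $i_0$ be the largest index $i$ such that $y_i$ occurs in $h$; $T_y(h)$ denotes the sum of the terms (monomials with their coefficients) of $h$ containing $y_{i_0}$. $T_z(h)$ is defined analogously with the variables $z_i$. *)

From mathcomp Require Import all_boot all_order all_algebra.
From mathcomp Require Import mpoly.
Set Implicit Arguments. Unset Strict Implicit. Unset Printing Implicit Defensive.
Import GRing.Theory.
Local Open Scope ring_scope.

(* The ring R_m = k[x_0..x_m, y_0..y_m, z_0..z_m], realised as an mpoly ring
   in (m+1)+(m+1)+(m+1) variables: x_i, y_i, z_i are blocks 1, 2, 3. *)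
Notation nv m := (m.+1 + m.+1 + m.+1)%N.
Notation Rm k m := {mpoly k[nv m]}.

Definition xidx (m : nat) (i : 'I_m.+1) : 'I_(nv m) := lshift m.+1 (lshift m.+1 i).
Definition yidx (m : nat) (i : 'I_m.+1) : 'I_(nv m) := lshift m.+1 (rshift m.+1 i).
Definition zidx (m : nat) (i : 'I_m.+1) : 'I_(nv m) := rshift (m.+1 + m.+1) i.

Definition xv (k : fieldType) (m : nat) (i : 'I_m.+1) : Rm k m := 'X_(xidx i).
Definition yv (k : fieldType) (m : nat) (i : 'I_m.+1) : Rm k m := 'X_(yidx i).
Definition zv (k : fieldType) (m : nat) (i : 'I_m.+1) : Rm k m := 'X_(zidx i).

Definition tser (k : fieldType) (m : nat) (v : 'I_m.+1 -> Rm k m) (p : nat)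
  : {poly Rm k m} := \sum_(i < m.+1 | (p <= i)%N) (v i)%:P * 'X^i.

Definition gpoly (S : comRingType) (x y z : S) : S :=
  x ^+ 2 + y ^+ 2 * z + y * z ^+ 2 + x * y * z.

(* G_{pqr}^{(l)}: the coefficient of t^l (l <= m, so this equals the
   coefficient in R_m[t]/<t^{m+1}>). *)
Definition Gpqr (k : fieldType) (m p q r l : nat) : Rm k m :=
  (gpoly (tser (@xv k m) p) (tser (@yv k m) q) (tser (@zv k m) r))`_l.

Definition occurs (k : fieldType) (n : nat) (h : {mpoly k[n]}) (j : 'I_n) : bool :=
  has (fun mm : 'X_{1..n} => (0 < mm j)%N) (msupp h).

Definition terms_with (k : fieldType) (n : nat) (h : {mpoly k[n]}) (j : 'I_n)
  : {mpoly k[n]} :=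
  \sum_(mm <- msupp h | (0 < mm j)%N) h@_mm *: 'X_[mm].

Definition Ty (k : fieldType) (m : nat) (h : Rm k m) : Rm k m :=
  if [exists i : 'I_m.+1, occurs h (yidx i)] then
    terms_with h (yidx (inord (\max_(i < m.+1 | occurs h (yidx i)) (i : nat))))
  else 0.

Definition Tz (k : fieldType) (m : nat) (h : Rm k m) : Rm k m :=
  if [exists i : 'I_m.+1, occurs h (zidx i)] then
    terms_with h (zidx (inord (\max_(i < m.+1 | occurs h (zidx i)) (i : nat))))
  else 0.

(* In characteristic 2 squaring is additive, so the squares in
   g(x_p, y_q, z_r) may be taken termwise in the series; reading off t^l gives
   the displayed formula, each summand of which is a single monomial.  Parts
   (1)-(3) then only ask which index triples satisfy the linear constraints.
   For T_y, the monomial y_{l-2r} z_r^2 is the only one of largest y-index: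
   a summand y_v z_w^2 has v = l - 2w, a summand y_v^2 z_w has
   v <= (l - r)/2 < l - 2r since 3r < l, and a summand x_u y_v z_w has
   v <= l - p - r < l - 2r since r < p.  T_z is symmetric. *)
From mathcomp Require Import all_boot all_order all_algebra.
From mathcomp Require Import mpoly zify.
Import GRing.Theory.
Local Open Scope ring_scope.

Lemma sqr_sum_pchar2 (R : comNzRingType) (R2 : (2 \in [pchar R])%N)
    (I : finType) (P : pred I) (F : I -> R) :
  (\sum_(i | P i) F i) ^+ 2 = \sum_(i | P i) F i ^+ 2.
Proof. by rewrite -(pFrobenius_autE R2) rmorph_sum. Qed.

Lemma big2_pred1 (V : nmodType) (I J : finType) (P : I -> J -> bool)
    (F : I -> J -> V) (a : I) (b : J) :
  (forall i j, P i j = (i == a) && (j == b)) ->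
  \sum_i \sum_(j | P i j) F i j = F a b.
Proof.
move=> Pab; rewrite pair_big_dep (big_pred1 (a, b)) // => -[i j] /=.
by rewrite Pab xpair_eqE.
Qed.

Section CoefSums.
Variable R : nzRingType.

Lemma coef_sumCXn (I : finType) (P : pred I) (c : I -> R) (e : I -> nat) l :
  (\sum_(i | P i) (c i)%:P * 'X^(e i))`_l = \sum_(i | P i && (e i == l)%N) c i.
Proof.
rewrite coef_sum big_mkcondr /=; apply: eq_bigr => i _.
by rewrite coefCM coefXn eq_sym; case: (_ == _); rewrite ?mulr1 ?mulr0.
Qed.

Lemma coef_sum2CXn (I J : finType) (P : pred I) (Q : pred J) (c : I -> J -> R)
    (e : I -> J -> nat) l :
  (\sum_(i | P i) \sum_(j | Q j) (c i j)%:P * 'X^(e i j))`_l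
  = \sum_i \sum_(j | [&& P i, Q j & (e i j == l)%N]) c i j.
Proof.
rewrite coef_sum big_mkcond /=; apply: eq_bigr => i _.
case: (P i) => /=; first by rewrite coef_sumCXn.
by rewrite big_pred0.
Qed.

Lemma coef_sum3CXn (I J K : finType) (P : pred I) (Q : pred J) (T : pred K)
    (c : I -> J -> K -> R) (e : I -> J -> K -> nat) l :
  (\sum_(i | P i) \sum_(j | Q j) \sum_(h | T h) (c i j h)%:P * 'X^(e i j h))`_l
  = \sum_i \sum_j \sum_(h | [&& P i, Q j, T h & (e i j h == l)%N]) c i j h.
Proof.
rewrite coef_sum big_mkcond /=; apply: eq_bigr => i _.
case: (P i) => /=; first by rewrite coef_sum2CXn.
by rewrite big1 // => j _; rewrite big_pred0.
Qed.

End CoefSums.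

Lemma mulCXn (R : comNzRingType) (a b : R) i j :
  (a%:P * 'X^i) * (b%:P * 'X^j) = (a * b)%:P * 'X^(i + j).
Proof. by rewrite polyCM exprD mulrACA. Qed.

Lemma sqrCXn (R : comNzRingType) (a : R) i :
  (a%:P * 'X^i) ^+ 2 = (a ^+ 2)%:P * 'X^(2 * i).
Proof. by rewrite expr2 mulCXn -expr2 addnn -mul2n. Qed.

Lemma Gpqr_formula (k : fieldType) (m p q r l : nat) :
  (2 \in [pchar k])%N ->
  let x := @xv k m in let y := @yv k m in let z := @zv k m in
  Gpqr k m p q r l = \sum_(u < m.+1 | (p <= u)%N && (2 * u == l)%N) x u ^+ 2
      + \sum_(v < m.+1) \sum_(w < m.+1 | [&& (q <= v)%N, (r <= w)%N & (2 * v + w == l)%N])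
          y v ^+ 2 * z w
      + \sum_(v < m.+1) \sum_(w < m.+1 | [&& (q <= v)%N, (r <= w)%N & (v + 2 * w == l)%N])
          y v * z w ^+ 2
      + \sum_(u < m.+1) \sum_(v < m.+1) \sum_(w < m.+1
            | [&& (p <= u)%N, (q <= v)%N, (r <= w)%N & (u + v + w == l)%N])
          x u * y v * z w.
Proof.
move=> k2 x y z; have R2 : (2 \in [pchar {poly Rm k m}])%N.
  by rewrite pchar_poly (rmorph_pchar (@mpolyC _ k)).
rewrite /Gpqr /gpoly /tser !coefD.
congr (_ + _ + _ + _).
- rewrite (sqr_sum_pchar2 _ R2).
  by under eq_bigr do rewrite sqrCXn; rewrite coef_sumCXn.
- rewrite (sqr_sum_pchar2 _ R2) big_distrlr /=.
  by under eq_bigr do under eq_bigr do rewrite sqrCXn mulCXn; rewrite coef_sum2CXn.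
- rewrite (sqr_sum_pchar2 _ R2) big_distrlr /=.
  by under eq_bigr do under eq_bigr do rewrite sqrCXn mulCXn; rewrite coef_sum2CXn.
- rewrite big_distrlr /= big_distrl /=.
  under eq_bigr do rewrite big_distrl /=.
  under eq_bigr do under eq_bigr do rewrite big_distrr /=.
  under eq_bigr do under eq_bigr do under eq_bigr do rewrite !mulCXn.
  by rewrite coef_sum3CXn.
Qed.

Section TermsWith.
Variables (k : fieldType) (n : nat).
Implicit Types (h : {mpoly k[n]}) (j : 'I_n).

Lemma mcoeff_terms_with h j mm :
  (terms_with h j)@_mm = if (0 < mm j)%N then h@_mm else 0.
Proof.
rewrite /terms_with raddf_sum /=.
under eq_bigr do rewrite mcoeffZ mcoeffX.
have [mm_h|mm_nh] := boolP (mm \in msupp h).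
- rewrite big_mkcond (bigD1_seq mm) ?msupp_uniq //= eqxx mulr1 big1 ?addr0.
    by case: ifP.
  by move=> mm' /negbTE ne; rewrite ne mulr0 if_same.
- have h_mm : h@_mm = 0 by apply/eqP; rewrite mcoeff_eq0.
  rewrite h_mm if_same big1 // => mm' _.
  by have [->|_] := eqVneq mm' mm; rewrite ?h_mm ?mul0r ?mulr0.
Qed.

Lemma terms_withD h1 h2 j :
  terms_with (h1 + h2) j = terms_with h1 j + terms_with h2 j.
Proof.
apply/mpolyP => mm; rewrite mcoeffD !mcoeff_terms_with mcoeffD.
by case: ifP; rewrite ?addr0.
Qed.

Lemma terms_with_sum (I : finType) (P : pred I) (F : I -> {mpoly k[n]}) j :
  terms_with (\sum_(i | P i) F i) j = \sum_(i | P i) terms_with (F i) j.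
Proof.
apply: (big_morph (fun h => terms_with h j)) => [h1 h2|]; first exact: terms_withD.
by apply/mpolyP => mm; rewrite mcoeff_terms_with mcoeff0 if_same.
Qed.

Lemma terms_with_mpolyX (mm : 'X_{1..n}) j :
  terms_with ('X_[mm] : {mpoly k[n]}) j = if (0 < mm j)%N then 'X_[mm] else 0.
Proof.
apply/mpolyP => mm'; rewrite mcoeff_terms_with mcoeffX.
have [<-|ne] := eqVneq mm mm'; first by case: ifP; rewrite ?mcoeffX ?eqxx ?mcoeff0.
by case: ifP; case: ifP; rewrite ?mcoeffX ?mcoeff0 ?(negbTE ne).
Qed.

Lemma terms_with_X2 (a b j : 'I_n) :
  terms_with ('X_a * 'X_b : {mpoly k[n]}) j
  = if (a == j) || (b == j) then 'X_a * 'X_b else 0.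
Proof.
rewrite -mpolyXD terms_with_mpolyX !mnmDE !mnm1E.
by case: (a == j); case: (b == j).
Qed.

Lemma terms_with_X3 (a b c j : 'I_n) :
  terms_with ('X_a * 'X_b * 'X_c : {mpoly k[n]}) j
  = if [|| a == j, b == j | c == j] then 'X_a * 'X_b * 'X_c else 0.
Proof.
rewrite -!mpolyXD terms_with_mpolyX !mnmDE !mnm1E.
by case: (a == j); case: (b == j); case: (c == j).
Qed.

Lemma occurs_terms_with h j : occurs h j = (terms_with h j != 0).
Proof.
apply/idP/idP => [/hasP[mm mm_h mm_j]|].
  apply: contraL mm_h => /eqP/mpolyP/(_ mm).
  by rewrite mcoeff_terms_with mm_j mcoeff0 => /eqP; rewrite mcoeff_eq0.
apply: contraR => /hasPn no_mm; apply/eqP/mpolyP => mm.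
rewrite mcoeff_terms_with mcoeff0; case: ifP => // mm_j; apply/eqP.
by rewrite mcoeff_eq0; apply/negP => /no_mm; rewrite mm_j.
Qed.

Lemma mpolyX_neq0 (mm : 'X_{1..n}) : ('X_[mm] : {mpoly k[n]}) != 0.
Proof.
apply: contra_neq (oner_neq0 k) => /(congr1 (mcoeff mm)).
by rewrite mcoeffX eqxx mcoeff0.
Qed.

End TermsWith.

Definition top_terms {k : fieldType} {n m : nat} (f : 'I_m.+1 -> 'I_n)
    (h : {mpoly k[n]}) : {mpoly k[n]} :=
  if [exists i, occurs h (f i)] then
    terms_with h (f (inord (\max_(i < m.+1 | occurs h (f i)) (i : nat))))
  else 0.

Lemma top_termsE {k : fieldType} {n m : nat} (f : 'I_m.+1 -> 'I_n)
    (h : {mpoly k[n]}) (i0 : 'I_m.+1) :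
  terms_with h (f i0) != 0 ->
  (forall i : 'I_m.+1, (i0 < i)%N -> terms_with h (f i) = 0) ->
  top_terms f h = terms_with h (f i0).
Proof.
move=> top above; have occ0 : occurs h (f i0) by rewrite occurs_terms_with.
rewrite /top_terms (introT existsP); last by exists i0.
suff -> : (\max_(i < m.+1 | occurs h (f i)) (i : nat)) = i0 by rewrite inord_val.
apply/eqP; rewrite eqn_leq (@leq_bigmax_cond _ (fun i => occurs h (f i)) val i0 occ0) andbT.
apply/bigmax_leqP => i; apply: contraTT; rewrite -ltnNge => /above.
by rewrite occurs_terms_with => ->; rewrite eqxx.
Qed.

Lemma eq_inord n (i : 'I_n.+1) j : (j <= n)%N -> (i == inord j) = (i == j :> nat).
Proof. by move=> le_jn; rewrite -val_eqE /= inordK. Qed.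

Definition idx_eqE := (eq_lshift, eq_rshift, eq_lrshift, eq_rlshift).

(* Proves [s1 + ... + sn = 0] for nested sums [si] whose index constraints
   are refuted by [lia]. *)
Ltac empty_sum :=
  first
  [ rewrite -[RHS](addr0 0); congr (_ + _); empty_sum
  | apply: big1 => ? ?; empty_sum
  | exfalso; lia ].

Section Gpqr.
Variables (k : fieldType) (m p q r l : nat).
Hypothesis k2 : (2 \in [pchar k])%N.
Local Notation x := (@xv k m).
Local Notation y := (@yv k m).
Local Notation z := (@zv k m).
Local Notation G := (Gpqr k m p q r l).

Lemma terms_with_Gpqr_y (i : 'I_m.+1) : terms_with G (yidx i) =
  \sum_(v < m.+1) \sum_(w < m.+1 | [&& (q <= v)%N, (r <= w)%N & (2 * v + w == l)%N]
                                   && (v == i :> nat))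
      y v ^+ 2 * z w
  + \sum_(v < m.+1) \sum_(w < m.+1 | [&& (q <= v)%N, (r <= w)%N & (v + 2 * w == l)%N]
                                     && (v == i :> nat))
      y v * z w ^+ 2
  + \sum_(u < m.+1) \sum_(v < m.+1) \sum_(w < m.+1
        | [&& (p <= u)%N, (q <= v)%N, (r <= w)%N & (u + v + w == l)%N] && (v == i :> nat))
      x u * y v * z w.
Proof.
rewrite Gpqr_formula // !terms_withD terms_with_sum big1 ?add0r => [|u _]; last first.
  by rewrite /xv expr2 terms_with_X2 /xidx /yidx !idx_eqE.
congr (_ + _ + _); rewrite terms_with_sum; apply: eq_bigr => v _.
- rewrite terms_with_sum [RHS]big_mkcondr; apply: eq_bigr => w _.
  by rewrite /yv /zv expr2 terms_with_X3 /yidx /zidx !idx_eqE !orbF orbb.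
- rewrite terms_with_sum [RHS]big_mkcondr; apply: eq_bigr => w _.
  by rewrite /yv /zv expr2 mulrA terms_with_X3 /yidx /zidx !idx_eqE !orbF.
- rewrite terms_with_sum; apply: eq_bigr => v' _.
  rewrite terms_with_sum [RHS]big_mkcondr; apply: eq_bigr => w _.
  by rewrite /xv /yv /zv terms_with_X3 /xidx /yidx /zidx !idx_eqE !orbF.
Qed.

Lemma terms_with_Gpqr_z (i : 'I_m.+1) : terms_with G (zidx i) =
  \sum_(v < m.+1) \sum_(w < m.+1 | [&& (q <= v)%N, (r <= w)%N & (2 * v + w == l)%N]
                                   && (w == i :> nat))
      y v ^+ 2 * z w
  + \sum_(v < m.+1) \sum_(w < m.+1 | [&& (q <= v)%N, (r <= w)%N & (v + 2 * w == l)%N]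
                                     && (w == i :> nat))
      y v * z w ^+ 2
  + \sum_(u < m.+1) \sum_(v < m.+1) \sum_(w < m.+1
        | [&& (p <= u)%N, (q <= v)%N, (r <= w)%N & (u + v + w == l)%N] && (w == i :> nat))
      x u * y v * z w.
Proof.
rewrite Gpqr_formula // !terms_withD terms_with_sum big1 ?add0r => [|u _]; last first.
  by rewrite /xv expr2 terms_with_X2 /xidx /zidx !idx_eqE.
congr (_ + _ + _); rewrite terms_with_sum; apply: eq_bigr => v _.
- rewrite terms_with_sum [RHS]big_mkcondr; apply: eq_bigr => w _.
  by rewrite /yv /zv expr2 terms_with_X3 /yidx /zidx !idx_eqE.
- rewrite terms_with_sum [RHS]big_mkcondr; apply: eq_bigr => w _.
  by rewrite /yv /zv expr2 mulrA terms_with_X3 /yidx /zidx !idx_eqE /= orbb.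
- rewrite terms_with_sum; apply: eq_bigr => v' _.
  rewrite terms_with_sum [RHS]big_mkcondr; apply: eq_bigr => w _.
  by rewrite /xv /yv /zv terms_with_X3 /xidx /yidx /zidx !idx_eqE.
Qed.

Lemma Gpqr_eq0 :
  (l < 2 * p)%N -> (l < 2 * q + r)%N -> (l < q + 2 * r)%N -> G = 0.
Proof. by move=> *; rewrite Gpqr_formula //; empty_sum. Qed.

Lemma sum_x2_pred1 : l = (2 * p)%N -> (p <= m)%N ->
  \sum_(u < m.+1 | (p <= u)%N && (2 * u == l)%N) x u ^+ 2 = x (inord p) ^+ 2.
Proof.
by move=> *; rewrite (big_pred1 (inord p)) // => u; rewrite /= eq_inord //; apply/idP/idP; lia.
Qed.

Lemma Gpqr_eq_x2 : (l <= m)%N ->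
  l = (2 * p)%N -> (l < 2 * q + r)%N -> (l < q + 2 * r)%N -> G = x (inord p) ^+ 2.
Proof.
move=> *; rewrite Gpqr_formula // -[RHS]addr0 -[RHS]addr0 -[RHS]addr0.
by congr (_ + _ + _ + _); [apply: sum_x2_pred1; lia | empty_sum ..].
Qed.

Lemma Gpqr_eq_cubic : (l <= m)%N -> (q < p)%N -> q = r -> l = (2 * p)%N -> l = (3 * q)%N ->
  G = x (inord p) ^+ 2 + y (inord q) ^+ 2 * z (inord q) + y (inord q) * z (inord q) ^+ 2.
Proof.
move=> *; subst r; rewrite Gpqr_formula // -[RHS]addr0.
congr (_ + _ + _ + _); [apply: sum_x2_pred1; lia | | | empty_sum];
  by apply: big2_pred1 => v w; rewrite !eq_inord; try lia; apply/idP/idP; lia.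
Qed.

Lemma Ty_Gpqr : (l <= m)%N -> (r < p)%N -> (3 * r < l)%N -> (q + 2 * r <= l)%N ->
  Ty G = y (inord (l - 2 * r)) * z (inord r) ^+ 2.
Proof.
move=> *; have top : terms_with G (yidx (inord (l - 2 * r)))
                     = y (inord (l - 2 * r)) * z (inord r) ^+ 2.
  rewrite terms_with_Gpqr_y inordK; last lia.
  rewrite -[RHS]add0r -[RHS]addr0; congr (_ + _ + _); [empty_sum | | empty_sum].
  by apply: big2_pred1 => v w; rewrite !eq_inord; try lia; apply/idP/idP; lia.
have -> : Ty G = top_terms (@yidx m) G by [].
rewrite (top_termsE _ _ (inord (l - 2 * r))) ?top //.
  by rewrite /yv /zv mulf_neq0 ?expf_neq0 ?mpolyX_neq0.
by move=> i; rewrite inordK ?terms_with_Gpqr_y => *; [empty_sum | lia].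
Qed.

Lemma Tz_Gpqr : (l <= m)%N -> (q < p)%N -> (3 * q < l)%N -> (2 * q + r <= l)%N ->
  Tz G = y (inord q) ^+ 2 * z (inord (l - 2 * q)).
Proof.
move=> *; have top : terms_with G (zidx (inord (l - 2 * q)))
                     = y (inord q) ^+ 2 * z (inord (l - 2 * q)).
  rewrite terms_with_Gpqr_z inordK; last lia.
  rewrite -[RHS]addr0 -[RHS]addr0; congr (_ + _ + _); [| empty_sum | empty_sum].
  by apply: big2_pred1 => v w; rewrite !eq_inord; try lia; apply/idP/idP; lia.
have -> : Tz G = top_terms (@zidx m) G by [].
rewrite (top_termsE _ _ (inord (l - 2 * q))) ?top //.
  by rewrite /yv /zv mulf_neq0 ?expf_neq0 ?mpolyX_neq0.
by move=> i; rewrite inordK ?terms_with_Gpqr_z => *; [empty_sum | lia].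
Qed.

End Gpqr.

Theorem lemma4p4 (k : fieldType) (hk : (2 \in [pchar k])%N) (m p q r l : nat)
    (hp : (0 < p <= m.+1)%N) (hq : (0 < q <= m.+1)%N) (hr : (0 < r <= m.+1)%N)
    (hl : (l <= m)%N) :
  let x := @xv k m in let y := @yv k m in let z := @zv k m in
  let G := Gpqr k m p q r l in
  G = \sum_(u < m.+1 | (p <= u)%N && (2 * u == l)%N) x u ^+ 2
      + \sum_(v < m.+1) \sum_(w < m.+1 | [&& (q <= v)%N, (r <= w)%N & (2 * v + w == l)%N])
          y v ^+ 2 * z w
      + \sum_(v < m.+1) \sum_(w < m.+1 | [&& (q <= v)%N, (r <= w)%N & (v + 2 * w == l)%N])
          y v * z w ^+ 2
      + \sum_(u < m.+1) \sum_(v < m.+1) \sum_(w < m.+1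
            | [&& (p <= u)%N, (q <= v)%N, (r <= w)%N & (u + v + w == l)%N])
          x u * y v * z w
  /\ ([&& (l < 2 * p)%N, (l < 2 * q + r)%N & (l < q + 2 * r)%N] -> G = 0)
  /\ ([&& (l == 2 * p)%N, (l < 2 * q + r)%N & (l < q + 2 * r)%N] -> G = x (inord p) ^+ 2)
  /\ ((q < p)%N -> q = r -> (l == 2 * p)%N -> (l == 3 * q)%N ->
        G = x (inord p) ^+ 2 + y (inord q) ^+ 2 * z (inord q) + y (inord q) * z (inord q) ^+ 2)
  /\ ((q <= p)%N -> (r < q)%N -> (2 * p <= l)%N -> (2 * p == q + 2 * r)%N ->
        Ty G = y (inord (l - 2 * r)) * z (inord r) ^+ 2)
  /\ ((r <= p)%N -> (q < r)%N -> (2 * p <= l)%N -> (2 * p == 2 * q + r)%N ->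
        Tz G = y (inord q) ^+ 2 * z (inord (l - 2 * q)))
  /\ ((q < p)%N -> q = r -> (3 * q < l)%N ->
        Ty G = y (inord (l - 2 * q)) * z (inord q) ^+ 2)
  /\ ((q < p)%N -> q = r -> (3 * q < l)%N ->
        Tz G = y (inord q) ^+ 2 * z (inord (l - 2 * q))).
Proof.
move=> x y z G.
split; first exact: Gpqr_formula.
split; first by move=> /and3P[*]; apply: Gpqr_eq0.
split; first by move=> /and3P[/eqP *]; apply: Gpqr_eq_x2.
split; first by move=> ? ? /eqP ? /eqP *; apply: Gpqr_eq_cubic.
split; first by move=> ? ? ? /eqP *; apply: Ty_Gpqr => //; lia.
split; first by move=> ? ? ? /eqP *; apply: Tz_Gpqr => //; lia.
split=> q_p r_q *; subst r; [apply: Ty_Gpqr | apply: Tz_Gpqr] => //; lia.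
Qed.
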